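(* Let $K,L\subseteq S$ with $k<l$ for all $k\in K$, $l\in L$. Then in $A$: $$\tau^-_K\tau^-_L=\sum_{i=1}^{\#K}(-1)^{\#K-i}\tau^-_{(K\cup L)\setminus\{k_i\}}=\sum_{i=1}^{\#L}(-1)^{i-1}\tau^-_{(K\cup L)\setminus\{l_i\}}.$$
   Context: $S$ is a finite set with a total order $<$, $R$ a commutative ring with $1$, $q\in R$, $A=R\langle t_s\mid s\in S\rangle$ the free associative algebra. Subsets are enumerated increasingly, $K=\{k_1<\dots<k_{\#K}\}$, etc. For $J=\{j_1<\dots<j_{\#J}\}$, $t_J=t_{j_1}\cdots t_{j_{\#J}}$; for $I=\{j_{\alpha_1}<\dots<j_{\alpha_{\#I}}\}\subseteq J$, $\ell_J(I)=\sum_\nu(\alpha_\nu-\nu)$; $\tau^-_J=\sum_{I\subseteq J,\ \#I\text{ odd}}(-1)^{\ell_J(I)}(-q)^{(\#I-1)/2}t_{J\setminus I}$. *)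

From HB Require Import structures.
From mathcomp Require Import all_boot all_order all_algebra.
Set Implicit Arguments. Unset Strict Implicit. Unset Printing Implicit Defensive.
Import Order.TTheory GRing.Theory.
Local Open Scope ring_scope.

Section FreeAlg.
Variables (d : Order.disp_t) (S : finOrderType d) (R : comPzRingType).

(* Elements of the free associative algebra R<t_s | s in S> are represented
   by their coefficient functions on words (seq S); a polynomial is such a
   function with finite support. *)
Definition word := seq S.
Definition FA := word -> R.

Definition FAone : FA := fun w => (w == [::])%:R.
Definition FAgen (s : S) : FA := fun w => (w == [:: s])%:R.
Definition FAmul (f g : FA) : FA :=
  fun w => \sum_(i < (size w).+1) f (take i w) * g (drop i w).

Definition senum (J : {set S}) : seq S := sort <=%O (enum J).

Definition tmon (J : {set S}) : FA := foldr (fun s p => FAmul (FAgen s) p) FAone (senum J).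

(* l_J(I) = sum_nu (alpha_nu - nu), where the nu-th element of I is the
   alpha_nu-th element of J (positions shifted to 0-based on both sides). *)
Definition ellJ (J I : {set S}) : nat :=
  \sum_(x <- senum I) (index x (senum J) - index x (senum I))%N.

Definition tauminus (q : R) (J : {set S}) : FA :=
  fun w => \sum_(I in powerset J | odd #|I|)
     (-1) ^+ (ellJ J I) * (- q) ^+ ((#|I|).-1./2) * tmon (J :\: I) w.

End FreeAlg.

From HB Require Import structures.
From mathcomp Require Import all_boot all_order all_algebra ring.
From Stdlib Require Import FunctionalExtensionality.
Import Order.TTheory GRing.Theory.
Set Implicit Arguments. Unset Strict Implicit. Unset Printing Implicit Defensive.

(* Both sides are combinations of the monomials t_X with X ⊆ K ∪ L: as K lies
   below L, t_{K∖I} t_{L∖I'} is the monomial t_{(K∖I) ∪ (L∖I')}, so it suffices to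
   compare the coefficients of each t_X.  With a = #(K∖X) and b = #(L∖X), the
   coefficient on the left vanishes unless a and b are odd.  On the right, deleting
   k from K ∪ L lowers ℓ by the number of elements of X below k; together with the
   prescribed sign, each term becomes a fixed sign times (-1)^(rank of k in K∖X)
   (resp. L∖X), and the alternating sum over these ranks is the parity of a
   (resp. b).  What remains is a comparison of signs and powers of -q for odd a, b. *)

Section Finsets.
Variable T : finType.
Implicit Types (A B I J K L X : {set T}).

Lemma setD_setD A B : B \subset A -> A :\: (A :\: B) = B.
Proof. by rewrite setDDr setDv set0U => /setIidPr. Qed.

Lemma setD_eq J I X : I \subset J -> (J :\: I == X) = (X \subset J) && (I == J :\: X).
Proof.
move=> sIJ; apply/eqP/andP => [<-|[sXJ /eqP ->]]; last exact: setD_setD.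
by rewrite setD_setD ?subsetDl.
Qed.

Lemma setUD_eq K L I (I' : {set T}) X : [disjoint K & L] -> I \subset K -> I' \subset L ->
  ((K :\: I) :|: (L :\: I') == X) = [&& X \subset K :|: L, I == K :\: X & I' == L :\: X].
Proof.
move=> disjKL sIK sIL; have xKL x : (x \in K) && (x \in L) = false.
  by apply/negbTE; rewrite -in_setI (disjoint_setI0 disjKL) in_set0.
apply/eqP/and3P => [<-|[sXM /eqP -> /eqP ->]]; last first.
  apply/setP => x; move: (xKL x) (introT implyP (subsetP sXM x)); rewrite !inE.
  by case: (x \in K) (x \in L) (x \in X) => [] [] [].
split; first exact: setUSS (subsetDl _ _) (subsetDl _ _).
all: apply/eqP/setP => x; move: (xKL x) (introT implyP (subsetP sIK x)).
all: move: (introT implyP (subsetP sIL x)); rewrite !inE.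
all: by case: (x \in K) (x \in L) (x \in I) (x \in I') => [] [] [] [].
Qed.

Lemma cards_setDU K L X : [disjoint K & L] ->
  #|(K :|: L) :\: X| = #|K :\: X| + #|L :\: X|.
Proof.
move=> disjKL; have disjD : [disjoint K :\: X & L :\: X].
  exact: disjointWl (subsetDl _ _) (disjointWr (subsetDl _ _) disjKL).
by rewrite setDUl cardsU (disjoint_setI0 disjD) cards0 subn0.
Qed.

Lemma setD_subsetU K L X : [disjoint K & L] -> X \subset K :|: L -> X :\: L = K :&: X.
Proof.
move=> disjKL sXKL; apply/setP => x; have /negbTE xKL : ~~ ((x \in K) && (x \in L)).
  by rewrite -in_setI (disjoint_setI0 disjKL) in_set0.
move: xKL (introT implyP (subsetP sXKL x)); rewrite !inE.
by case: (x \in K) (x \in L) (x \in X) => [] [] [].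
Qed.

End Finsets.

Section SortedEnumeration.
Variables (d : Order.disp_t) (S : finOrderType d).
Implicit Types (A B I J K L JK JL : {set S}) (x y : S).

Lemma big_senum (R : Type) (idx : R) (op : Monoid.com_law idx) A (F : S -> R) :
  \big[op/idx]_(x <- senum A) F x = \big[op/idx]_(x in A) F x.
Proof. by rewrite /senum (perm_big _ (permEl (perm_sort _ _))) big_enum. Qed.

Lemma mem_senum A x : (x \in senum A) = (x \in A).
Proof. by rewrite /senum mem_sort mem_enum. Qed.

Lemma senum_uniq A : uniq (senum A).
Proof. by rewrite /senum sort_uniq enum_uniq. Qed.

Lemma size_senum A : size (senum A) = #|A|.
Proof. by rewrite /senum size_sort cardE. Qed.

Lemma eq_senum (w : seq S) A :
  (w == senum A) = (w == senum [set x in w]) && (A == [set x in w]).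
Proof.
apply/idP/andP => [/eqP ->|[/eqP w_sorted /eqP ->]]; last exact/eqP.
have -> : [set x in senum A] = A by apply/setP => x; rewrite inE mem_senum.
by rewrite !eqxx.
Qed.

Lemma senum_setU A B : (forall a b, a \in A -> b \in B -> (a < b)%O) ->
  senum (A :|: B) = senum A ++ senum B.
Proof.
move=> ltAB; have disjAB x : x \in A -> x \notin B.
  by move=> xA; apply/negP => /(ltAB x x xA); rewrite ltxx.
have -> : senum (A :|: B) = sort <=%O (senum A ++ senum B).
  apply/perm_sort_leP; apply: uniq_perm; first exact: enum_uniq.
    rewrite cat_uniq !senum_uniq /= andbT; apply/hasPn => x.
    by rewrite !mem_senum => xB; apply: contraL xB => /disjAB.
  by move=> x; rewrite mem_cat !mem_senum mem_enum inE.
apply: sort_le_id; rewrite le_sorted_pairwise pairwise_cat.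
rewrite -!le_sorted_pairwise /senum !sort_le_sorted !andbT.
by apply/allrelP => a b; rewrite !mem_sort !mem_enum => aA bB; apply/ltW/ltAB.
Qed.

Definition below A x : nat := \sum_(y in A) (y < x)%O.

Lemma index_sorted_lt (s : seq S) x : sorted <%O s -> x \in s ->
  index x s = \sum_(y <- s) (y < x)%O.
Proof.
rewrite lt_sorted_pairwise; elim: s => [//|y s IHs] /= /andP [lt_y lt_s].
rewrite in_cons big_cons; case: eqVneq => [->|neq_xy] /= xs.
  rewrite ltxx big1_seq // => z /= zs.
  by move/allP: lt_y => /(_ z zs) /lt_gtF ->.
by rewrite IHs //; move/allP: lt_y => /(_ x xs) ->.
Qed.

Lemma index_senum A x : x \in A -> index x (senum A) = below A x.
Proof.
move=> xA; rewrite index_sorted_lt ?big_senum ?mem_senum //.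
by rewrite /senum sort_lt_sorted enum_uniq.
Qed.

Lemma below_setID A B x : below A x = below (A :&: B) x + below (A :\: B) x.
Proof. exact: big_setID. Qed.

Lemma below_setU A B x : [disjoint A & B] -> below (A :|: B) x = below A x + below B x.
Proof. by move=> disjAB; rewrite /below -bigU //; apply: eq_bigl => y; rewrite !inE. Qed.

Lemma below_gt A x : (forall y, y \in A -> (x < y)%O) -> below A x = 0.
Proof. by move=> gtA; rewrite /below big1 // => y /gtA /lt_gtF ->. Qed.

Lemma below_lt A x : (forall y, y \in A -> (y < x)%O) -> below A x = #|A|.
Proof. by move=> ltA; rewrite /below -sum1_card; apply: eq_bigr => y /ltA ->. Qed.

Lemma below_lt_card A x : x \in A -> below A x < #|A|.
Proof.
move=> xA; rewrite /below -sum1_card (bigD1 x) //= [in X in _ < X](bigD1 x) //=.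
by rewrite ltxx add1n ltnS; apply: leq_sum => y _; case: (y < x)%O.
Qed.

Lemma lt_disjoint K L : (forall k l, k \in K -> l \in L -> (k < l)%O) ->
  [disjoint K & L].
Proof.
by move=> ltKL; apply/pred0P => x /=; apply/negP => /andP [/ltKL lt_x /lt_x]; rewrite ltxx.
Qed.

Lemma ellJE J I : I \subset J -> ellJ J I = \sum_(x in I) below (J :\: I) x.
Proof.
move=> sIJ; rewrite /ellJ big_senum; apply: eq_bigr => x xI.
by rewrite !index_senum ?(subsetP sIJ) // (below_setID J I) (setIidPr sIJ) addKn.
Qed.

Lemma ellJ_setD1 J I k : I \subset J -> k \in I ->
  ellJ (J :\ k) (I :\ k) + below (J :\: I) k = ellJ J I.
Proof.
move=> sIJ kI; rewrite !ellJE ?setSD // [in RHS](big_setD1 k kI) /= addnC.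
congr (_ + _); apply: eq_bigr => x _; congr below.
by apply/setP => y; rewrite !inE; case: eqVneq => // ->; rewrite kI.
Qed.

Lemma ellJ_setU K L JK JL : (forall k l, k \in K -> l \in L -> (k < l)%O) ->
  JK \subset K -> JL \subset L ->
  ellJ (K :|: L) (JK :|: JL) = ellJ K JK + ellJ L JL + #|K :\: JK| * #|JL|.
Proof.
move=> ltKL sJK sJL.
have disjKL := lt_disjoint ltKL.
have disjJ : [disjoint JK & JL] by apply: disjointWl sJK (disjointWr sJL disjKL).
have setD_KL : (K :|: L) :\: (JK :|: JL) = (K :\: JK) :|: (L :\: JL).
  apply/setP => x; have /pred0P/(_ x) /= := disjKL.
  move: (introT implyP (subsetP sJK x)) (introT implyP (subsetP sJL x)); rewrite !inE.
  by case: (x \in K) (x \in L) (x \in JK) (x \in JL) => [] [] [] [].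
have disjD : [disjoint K :\: JK & L :\: JL].
  by apply: disjointWl (subsetDl _ _) (disjointWr (subsetDl _ _) disjKL).
rewrite !ellJE ?setUSS // setD_KL (eq_bigl [predU JK & JL]) => [|x]; last by rewrite !inE.
rewrite bigU // -addnA; congr (_ + _).
  apply: eq_bigr => x xJK; have xK := subsetP sJK x xJK.
  rewrite below_setU // [below (L :\: _) _]below_gt ?addn0 // => y.
  by rewrite inE => /andP [_ /(ltKL x y xK)].
rewrite mulnC -sum_nat_const -big_split /=; apply: eq_bigr => x xJL.
have xL := subsetP sJL x xJL.
rewrite addnC below_setU // below_lt // => y.
by rewrite inE => /andP [_ /ltKL]; apply.
Qed.

End SortedEnumeration.

Section Monomials.
Variables (d : Order.disp_t) (S : finOrderType d) (R : comPzRingType).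
Local Open Scope ring_scope.

Lemma FAmul_indicator (s t w : seq S) :
  FAmul (fun v => (v == s)%:R) (fun v => (v == t)%:R) w = (w == s ++ t)%:R :> R.
Proof.
have split_eq (i : 'I_(size w).+1) :
    (take i w == s) && (drop i w == t) = (i == size s :> nat) && (w == s ++ t).
  apply/andP/andP => [[/eqP <- /eqP <-]|[/eqP -> /eqP ->]].
    by rewrite cat_take_drop size_takel ?eqxx // -ltnS.
  by rewrite take_size_cat ?drop_size_cat.
rewrite /FAmul; under eq_bigr do rewrite -natrM mulnb split_eq.
have [w_st | _] := eqVneq; last by rewrite big1 // => i _; rewrite andbF.
have lt_s : (size s < (size w).+1)%N by rewrite w_st size_cat ltnS leq_addr.
rewrite (bigD1 (Ordinal lt_s)) //= eqxx big1 ?addr0 // => i.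
by rewrite andbT -val_eqE => /negbTE ->.
Qed.

Lemma tmonE (J : {set S}) w : tmon R J w = (w == senum J)%:R.
Proof.
rewrite /tmon; elim: (senum J) w => [//|x s IHs] w /=.
transitivity (FAmul (fun v => (v == [:: x])%:R) (fun v => (v == s)%:R) w : R).
  by apply: eq_bigr => i _; rewrite IHs.
exact: FAmul_indicator.
Qed.

Lemma FAmul_tmon (A B : {set S}) w :
  FAmul (tmon R A) (tmon R B) w = (w == senum A ++ senum B)%:R.
Proof.
by rewrite -FAmul_indicator; apply: eq_bigr => i _; rewrite !tmonE.
Qed.

Lemma FAmul_sum (I J : finType) (P : pred I) (Q : pred J) (a : I -> R) (b : J -> R)
    (f : I -> FA S R) (g : J -> FA S R) w :
  FAmul (fun v => \sum_(i | P i) a i * f i v) (fun v => \sum_(j | Q j) b j * g j v) w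
  = \sum_(i | P i) \sum_(j | Q j) a i * b j * FAmul (f i) (g j) w.
Proof.
rewrite /FAmul; under eq_bigr do rewrite mulr_suml; rewrite exchange_big.
apply: eq_bigr => i _; under eq_bigr do rewrite mulr_sumr; rewrite exchange_big.
by apply: eq_bigr => j _; rewrite mulr_sumr; apply: eq_bigr => k _; rewrite mulrACA.
Qed.

End Monomials.

Lemma odd_pred_addn a b : odd a -> odd (a + b).-1 = odd b.
Proof. by case: a => // a /= /negbTE odd_a; rewrite ?addSn /= oddD odd_a. Qed.

Lemma half_pred2_addn a b : odd a -> odd b -> (a + b).-2./2 = a.-1./2 + b.-1./2.
Proof.
by case: a => // a; case: b => // b /= /negbTE odd_a _; rewrite ?addnS ?addSn /= halfD odd_a.
Qed.

Section Signs.
Variables (R : comPzRingType).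
Local Open Scope ring_scope.

Lemma sum_delta (T : finType) (P : pred T) (F : T -> R) a :
  \sum_(i | P i) F i * (i == a)%:R = (P a)%:R * F a.
Proof.
rewrite big_mkcond (bigD1 a) //= eqxx mulr1 big1 ?addr0.
  by case: (P a); rewrite ?mul1r ?mul0r.
by move=> i /negbTE ->; rewrite mulr0; case: (P i).
Qed.

Lemma signr_eq m n : odd m = odd n -> (-1) ^+ m = (-1) ^+ n :> R.
Proof. by move=> odd_mn; rewrite -signr_odd odd_mn signr_odd. Qed.

Lemma signr_addn m n : (-1) ^+ m = (-1) ^+ (m + n) * (-1) ^+ n :> R.
Proof. by rewrite exprD -mulrA -expr2 sqrr_sign mulr1. Qed.

Lemma sum_signr_ord n : \sum_(i < n) (-1) ^+ i = (odd n)%:R :> R.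
Proof.
elim: n => [|n IHn]; first by rewrite big_ord0.
rewrite big_ord_recr /= IHn -signr_odd; case: (odd n) => /=.
  by rewrite expr1 addrN.
by rewrite expr0 add0r.
Qed.

Lemma sum_index (T : eqType) (s : seq T) (F : nat -> R) : uniq s ->
  \sum_(x <- s) F (index x s) = \sum_(i < size s) F i.
Proof.
elim: s F => [|y s IHs] F /=; first by rewrite big_nil big_ord0.
move=> /andP [ys uniq_s]; rewrite big_cons big_ord_recl eqxx; congr (_ + _).
rewrite -(IHs (fun i => F i.+1)) //; apply: eq_big_seq => x xs.
by case: eqVneq xs ys => [->|] // ->.
Qed.

Lemma sum_signr_below (d : Order.disp_t) (S : finOrderType d) (A : {set S}) :
  \sum_(k in A) (-1) ^+ below A k = (odd #|A|)%:R :> R.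
Proof.
rewrite -big_senum -size_senum -sum_signr_ord -(sum_index (fun i => (-1) ^+ i)) ?senum_uniq //.
by apply: eq_big_seq => x; rewrite mem_senum => xA; rewrite index_senum.
Qed.

End Signs.

Section Coefficients.
Variables (d : Order.disp_t) (S : finOrderType d) (R : comPzRingType) (q : R).
Implicit Types (A I J K L M X : {set S}).
Local Open Scope ring_scope.

Definition tcoef J I : R := (-1) ^+ ellJ J I * (- q) ^+ (#|I|.-1./2).

(* The coefficient of [t_X] in [tauminus q J] when [X \subset J], see [tauminusE]. *)
Definition tauminus_coef J X : R := (odd #|J :\: X|)%:R * tcoef J (J :\: X).

Lemma tauminusE J w : tauminus q J w =
  (w == senum [set x in w])%:R * (([set x in w] \subset J)%:R * tauminus_coef J [set x in w]).
Proof.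
set X := [set x in w].
transitivity (\sum_(I in powerset J | odd #|I|)
    (w == senum X)%:R * ((X \subset J)%:R * (tcoef J I * (I == J :\: X)%:R))).
  apply: eq_bigr => I; rewrite powersetE => /andP [sIJ _].
  rewrite -/(tcoef J I) tmonE eq_senum -/X (setD_eq _ sIJ) -!mulnb !natrM.
  by rewrite mulrCA; congr (_ * _); rewrite mulrCA.
by rewrite -!mulr_sumr sum_delta powersetE subsetDl.
Qed.

Lemma FAmul_tauminus K L w : (forall k l, k \in K -> l \in L -> (k < l)%O) ->
  FAmul (tauminus q K) (tauminus q L) w = (w == senum [set x in w])%:R *
    (([set x in w] \subset K :|: L)%:R *
     (tauminus_coef K [set x in w] * tauminus_coef L [set x in w])).
Proof.
move=> ltKL; set X := [set x in w].
rewrite FAmul_sum; transitivity (\sum_(I in powerset K | odd #|I|)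
  \sum_(I' in powerset L | odd #|I'|) (w == senum X)%:R * ((X \subset K :|: L)%:R *
    ((tcoef K I * (I == K :\: X)%:R) * (tcoef L I' * (I' == L :\: X)%:R)))).
  apply: eq_bigr => I; rewrite powersetE => /andP [sIK _].
  apply: eq_bigr => I'; rewrite powersetE => /andP [sIL _].
  rewrite FAmul_tmon -senum_setU; last first.
    by move=> a b /setDP [aK _] /setDP [bL _]; exact: ltKL.
  rewrite eq_senum -/X (setUD_eq _ (lt_disjoint ltKL) sIK sIL) -!mulnb !natrM.
  rewrite /tcoef; ring.
under eq_bigr do rewrite -!mulr_sumr.
by rewrite -!mulr_sumr -mulr_suml !sum_delta !powersetE !subsetDl.
Qed.

Lemma sum_tauminus_setD1 M (s : seq S) (c : S -> R) w :
  \sum_(k <- s) c k * tauminus q (M :\ k) w = (w == senum [set x in w])%:R *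
    (([set x in w] \subset M)%:R *
     \sum_(k <- s) c k * ((k \notin [set x in w])%:R * tauminus_coef (M :\ k) [set x in w])).
Proof.
rewrite !mulr_sumr; apply: eq_bigr => k _; rewrite tauminusE subsetD1 -mulnb natrM.
by move: (_ %:R) (_ %:R) (_ %:R) (tauminus_coef _ _) => e s1 s2 t; ring.
Qed.

Lemma tauminus_coef_setD1 M X k : X \subset M -> k \in M :\: X ->
  tauminus_coef (M :\ k) X = (-1) ^+ below X k *
    ((-1) ^+ ellJ M (M :\: X) * (odd #|M :\: X|.-1)%:R * (- q) ^+ (#|M :\: X|.-2./2)).
Proof.
move=> sXM kMX; have setD_k : (M :\ k) :\: X = (M :\: X) :\ k by rewrite !setDDl setUC.
have card_k : #|(M :\: X) :\ k| = #|M :\: X|.-1 by rewrite [in RHS](cardsD1 k) kMX.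
rewrite /tauminus_coef /tcoef setD_k card_k.
rewrite (signr_addn R (ellJ (M :\ k) _) (below (M :\: (M :\: X)) k)).
rewrite ellJ_setD1 ?subsetDl // setD_setD //.
move: (odd _)%:R ((-1) ^+ _) ((-1) ^+ _) ((- q) ^+ _) => o s s' r; ring.
Qed.

(* The hypothesis says that [sg k] plus the shift [below X k] of [ellJ] caused by
   deleting [k] is, up to parity, [e] plus the rank of [k] in [A :\: X]; summing
   over these ranks leaves the parity of [#|A :\: X|]. *)
Lemma sum_signr_tauminus_coef_setD1 M X A (sg : S -> nat) (e : nat) :
  X \subset M -> A \subset M ->
  (forall k, k \in A :\: X -> odd (sg k + below X k) = odd (e + below (A :\: X) k)) ->
  \sum_(k in A) (-1) ^+ sg k * ((k \notin X)%:R * tauminus_coef (M :\ k) X) =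
  (-1) ^+ e * (odd #|A :\: X|)%:R *
    ((-1) ^+ ellJ M (M :\: X) * (odd #|M :\: X|.-1)%:R * (- q) ^+ (#|M :\: X|.-2./2)).
Proof.
move=> sXM sAM sg_parity.
rewrite (big_setID X) /= [X in X + _]big1 ?add0r; last first.
  by move=> k /setIP [_ ->]; rewrite /= mul0r mulr0.
rewrite -sum_signr_below mulr_sumr mulr_suml; apply: eq_bigr => k kAX.
have [kA kX] := setDP kAX.
rewrite kX mul1r tauminus_coef_setD1 ?inE ?kX ?(subsetP sAM) // mulrA -exprD.
by rewrite (signr_eq _ (sg_parity k kAX)) exprD mulrA.
Qed.

End Coefficients.

Section Product.
Variables (d : Order.disp_t) (S : finOrderType d) (R : comPzRingType) (q : R).
Variables (K L X : {set S}).
Hypothesis ltKL : forall k l, k \in K -> l \in L -> (k < l)%O.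
Hypothesis sXKL : X \subset K :|: L.
Let disjKL : [disjoint K & L] := lt_disjoint ltKL.
Local Open Scope ring_scope.

Lemma below_X_left k : k \in K -> below X k = below (K :&: X) k.
Proof.
move=> kK; rewrite (below_setID X L) (setD_subsetU disjKL sXKL) below_gt //.
by move=> y /setIP [_ /(ltKL kK)].
Qed.

Lemma below_X_right l : l \in L -> below X l = #|K :&: X| + below (L :&: X) l.
Proof.
move=> lL; rewrite (below_setID X L) (setD_subsetU disjKL sXKL) setIC addnC below_lt //.
by move=> y /setIP [yK _]; exact: ltKL.
Qed.

Lemma tauminus_coef_mul : tauminus_coef q K X * tauminus_coef q L X =
  (odd #|K :\: X| && odd #|L :\: X|)%:R * (-1) ^+ (#|K :&: X| * #|L :\: X|) *
  ((-1) ^+ ellJ (K :|: L) ((K :|: L) :\: X) * (- q) ^+ (#|(K :|: L) :\: X|.-2./2)).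
Proof.
rewrite (cards_setDU _ disjKL) setDUl ellJ_setU ?subsetDl // setDDr setDv set0U.
rewrite /tauminus_coef /tcoef.
case odd_a: (odd #|K :\: X|); last by rewrite !mul0r.
case odd_b: (odd #|L :\: X|); last by rewrite mul0r mulr0 !mul0r.
rewrite half_pred2_addn // !exprD /= !mul1r.
(* [ellJ_setU] contributes a second copy of the sign (-1)^(#|K :&: X| * #|L :\: X|) *)
have ss : (-1) ^+ (#|K :&: X| * #|L :\: X|) ^+ 2 = 1 :> R by rewrite sqrr_sign.
move: ss; move: ((-1) ^+ (_ * _)) ((-1) ^+ ellJ K _) ((-1) ^+ ellJ L _) => s s1 s2 ss.
move: ((- q) ^+ _) ((- q) ^+ _) => r1 r2.
by rewrite -[LHS]mul1r -ss; ring.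
Qed.

Lemma tauminus_coef_mul_left : tauminus_coef q K X * tauminus_coef q L X =
  \sum_(k <- senum K) (-1) ^+ (#|K| - (index k (senum K)).+1) *
    ((k \notin X)%:R * tauminus_coef q ((K :|: L) :\ k) X).
Proof.
rewrite big_senum (eq_bigr (fun k => (-1) ^+ (#|K| - (below K k).+1) *
  ((k \notin X)%:R * tauminus_coef q ((K :|: L) :\ k) X))) => [|k kK]; last first.
  by rewrite index_senum.
rewrite (sum_signr_tauminus_coef_setD1 (e := #|K|.+1) q sXKL (subsetUl K L)) => [|k]; last first.
  case/setDP => kK _; have := below_lt_card kK.
  rewrite below_X_left // (below_setID K X) => lt_K; rewrite oddD oddB // /= !oddD.
  by case: (odd #|K|) (odd (below _ k)) (odd (below _ k)) => [] [] [].
rewrite tauminus_coef_mul (cards_setDU _ disjKL) -(cardsID X K).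
case odd_a: (odd #|K :\: X|); last by rewrite !(mulr0, mul0r).
rewrite odd_pred_addn //; case odd_b: (odd #|L :\: X|); last by rewrite !(mulr0, mul0r).
rewrite (@signr_eq R _ (#|K :&: X| + #|K :\: X|).+1); last first.
  by rewrite oddM odd_b andbT /= oddD odd_a addbT negbK.
by rewrite /= !mulr1n !mul1r !mulr1.
Qed.

Lemma tauminus_coef_mul_right : tauminus_coef q K X * tauminus_coef q L X =
  \sum_(l <- senum L) (-1) ^+ index l (senum L) *
    ((l \notin X)%:R * tauminus_coef q ((K :|: L) :\ l) X).
Proof.
rewrite big_senum (eq_bigr (fun l => (-1) ^+ below L l *
  ((l \notin X)%:R * tauminus_coef q ((K :|: L) :\ l) X))) => [|l lL]; last first.
  by rewrite index_senum.
rewrite (sum_signr_tauminus_coef_setD1 (e := #|K :&: X|) q sXKL (subsetUr K L)) => [|l]; last first.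
  case/setDP => lL _; rewrite below_X_right // (below_setID L X) !oddD.
  by case: (odd #|K :&: X|) (odd (below _ l)) (odd (below _ l)) => [] [] [].
rewrite tauminus_coef_mul (cards_setDU _ disjKL).
case odd_b: (odd #|L :\: X|); last by rewrite andbF !(mulr0, mul0r).
rewrite addnC odd_pred_addn // andbT; case odd_a: (odd #|K :\: X|); last by rewrite !(mulr0, mul0r).
rewrite (@signr_eq R _ #|K :&: X|); last by rewrite oddM odd_b andbT.
by rewrite /= !mulr1n !mul1r !mulr1.
Qed.

End Product.

Unset Implicit Arguments.
Local Open Scope ring_scope.

Theorem lemma3p2 (d : Order.disp_t) (S : finOrderType d) (R : comPzRingType)
  (q : R) (K L : {set S}) :
  (forall k l : S, k \in K -> l \in L -> (k < l)%O) ->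
  FAmul (tauminus q K) (tauminus q L)
    = (fun w => \sum_(k <- senum K)
         (-1) ^+ (#|K| - (index k (senum K)).+1) * tauminus q ((K :|: L) :\ k) w)
  /\
  FAmul (tauminus q K) (tauminus q L)
    = (fun w => \sum_(l <- senum L)
         (-1) ^+ (index l (senum L)) * tauminus q ((K :|: L) :\ l) w).
Proof.
move=> ltKL; split; apply: functional_extensionality => w;
  rewrite FAmul_tauminus // sum_tauminus_setD1; congr (_ * _);
  have [sXKL | _] := boolP ([set x in w] \subset K :|: L); rewrite ?mul0r // !mul1r.
  exact: tauminus_coef_mul_left.
exact: tauminus_coef_mul_right.
Qed.
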